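(* Let $\mathbb K$ be a field with $2\in\mathbb K^\times$, $A$ a unital commutative associative $\mathbb K$-algebra, $\mathfrak k$ a $\mathbb K$-Lie algebra and $\mathfrak g=A\otimes\mathfrak k$. Let $p_{\mathfrak k}:\Lambda^2(\mathfrak k)\to Z_2(\mathfrak k)$ be a linear projection onto $Z_2(\mathfrak k)$, and let $\tilde f^u:=P^{-1}\circ\big(p_1,(\mathrm{id}_A\otimes p_{\mathfrak k})\circ p_2,p_3\big):\Lambda^2(\mathfrak g)\to Z_2(\mathfrak g)$. Then $\tilde f^u$ maps $B_2(\mathfrak g)$ into itself, hence induces a 2-cocycle $f^u:\Lambda^2(\mathfrak g)\to H_2(\mathfrak g)=Z_2(\mathfrak g)/B_2(\mathfrak g)$, and for every vector space $\mathfrak z$ the map $\mathrm{Lin}(H_2(\mathfrak g),\mathfrak z)\to H^2(\mathfrak g,\mathfrak z)$, $\phi\mapsto[\phi\circ f^u]$, is a linear bijection.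
   Context: $\mathfrak g$ has bracket $[a\otimes x,a'\otimes x']=aa'\otimes[x,x']$, $ax=a\otimes x$, unit $\mathbf 1$. $v\wedge w=\tfrac12(v\otimes w-w\otimes v)$, $v\vee w=\tfrac12(v\otimes w+w\otimes v)$. For a Lie algebra $\mathfrak h$: $Z_2(\mathfrak h)=\ker(\Lambda^2(\mathfrak h)\to\mathfrak h,\ u\wedge v\mapsto[u,v])$, $B_2(\mathfrak h)$ is the image of $\Lambda^3(\mathfrak h)\to\Lambda^2(\mathfrak h)$, $u\wedge v\wedge w\mapsto[u,v]\wedge w+[v,w]\wedge u+[w,u]\wedge v$, $H_2(\mathfrak h)=Z_2(\mathfrak h)/B_2(\mathfrak h)$. $H^2(\mathfrak g,\mathfrak z)$ is the space of linear maps $\Lambda^2(\mathfrak g)\to\mathfrak z$ vanishing on $B_2(\mathfrak g)$ modulo those of the form $u\wedge v\mapsto-\ell([u,v])$, $\ell:\mathfrak g\to\mathfrak z$ linear. $I_A$ is the kernel of multiplication $S^2(A)\to A$. $P=(p_1,p_2,p_3)$ is the linear isomorphism $\Lambda^2(\mathfrak g)\to(\Lambda^2(A)\otimes S^2(\mathfrak k))\oplus(A\otimes\Lambda^2(\mathfrak k))\oplus(I_A\otimes\Lambda^2(\mathfrak k))$ with $p_1(ax\wedge by)=a\wedge b\otimes x\vee y$, $p_2(ax\wedge by)=ab\otimes x\wedge y$, $p_3(ax\wedge by)=(a\vee b-ab\vee\mathbf 1)\otimes x\wedge y$. *)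

From HB Require Import structures.
From mathcomp Require Import all_boot all_order all_algebra.
Set Implicit Arguments. Unset Strict Implicit. Unset Printing Implicit Defensive.
Import GRing.Theory.
Local Open Scope ring_scope.

(* Tensor products, exterior and symmetric powers are given by their
   universal properties (they are unique up to unique isomorphism). *)
Section Defs.
Variable K : fieldType.

Definition lin (U V : lmodType K) (f : U -> V) : Prop :=
  forall (a : K) (x y : U), f (a *: x + y) = a *: f x + f y.

Definition bilin (U V W : lmodType K) (b : U -> V -> W) : Prop :=
  (forall x, lin (b x)) /\ (forall y, lin (fun x => b x y)).

Definition trilin (U W : lmodType K) (b : U -> U -> U -> W) : Prop :=
  (forall x y, lin (b x y)) /\ (forall x z, lin (fun y => b x y z)) /\
  (forall y z, lin (fun x => b x y z)).

Definition generated2 (U V T : lmodType K) (t : U -> V -> T) : Prop :=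
  forall (W : lmodType K) (f g : T -> W), lin f -> lin g ->
    (forall u v, f (t u v) = g (t u v)) -> forall x, f x = g x.

Definition is_tensor (U V T : lmodType K) (t : U -> V -> T) : Prop :=
  bilin t /\ generated2 t /\
  forall (W : lmodType K) (b : U -> V -> W), bilin b ->
    exists f : T -> W, lin f /\ forall u v, f (t u v) = b u v.

Definition is_ext2 (V L : lmodType K) (w : V -> V -> L) : Prop :=
  bilin w /\ (forall v, w v v = 0) /\ generated2 w /\
  forall (W : lmodType K) (b : V -> V -> W), bilin b -> (forall v, b v v = 0) ->
    exists f : L -> W, lin f /\ forall u v, f (w u v) = b u v.

Definition is_sym2 (V S : lmodType K) (s : V -> V -> S) : Prop :=
  bilin s /\ (forall u v, s u v = s v u) /\ generated2 s /\
  forall (W : lmodType K) (b : V -> V -> W), bilin b -> (forall u v, b u v = b v u) ->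
    exists f : S -> W, lin f /\ forall u v, f (s u v) = b u v.

Definition alt3 (V W : lmodType K) (b : V -> V -> V -> W) : Prop :=
  (forall u v, b u u v = 0) /\ (forall u v, b u v u = 0) /\ (forall u v, b v u u = 0).

Definition is_ext3 (V L : lmodType K) (w : V -> V -> V -> L) : Prop :=
  trilin w /\ alt3 w /\
  (forall (W : lmodType K) (f g : L -> W), lin f -> lin g ->
    (forall u v x, f (w u v x) = g (w u v x)) -> forall y, f y = g y) /\
  forall (W : lmodType K) (b : V -> V -> V -> W), trilin b -> alt3 b ->
    exists f : L -> W, lin f /\ forall u v x, f (w u v x) = b u v x.

Definition is_lie (V : lmodType K) (br : V -> V -> V) : Prop :=
  bilin br /\ (forall x, br x x = 0) /\
  (forall x y z, br x (br y z) + br y (br z x) + br z (br x y) = 0).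

End Defs.

From HB Require Import structures.
From mathcomp Require Import all_boot all_order all_algebra.
From mathcomp Require Import boolp classical_sets.
Import GRing.Theory.
Set Implicit Arguments. Unset Strict Implicit. Unset Printing Implicit Defensive.
Local Open Scope ring_scope.

(* Write [∂ : Λ^2(g) -> g] for [u ∧ v ↦ [u, v]].  Every [x] in [Λ^2(g)] is recovered
   linearly from [(p1 x, p2 x, p3 x)], and [∂ = (id_A ⊗ ∂_k) ∘ p2].  Hence [f~] only
   moves the [p2]-component, by an element of [A ⊗ (1 - p_k) Λ^2(k)]; since
   [1 - p_k] factors through [∂_k], this gives [x - f~ x = r (∂ x)] for a linear
   [r : g -> Λ^2(g)].  Such a retraction onto [Z_2(g) = ker ∂] fixes
   [B_2(g) ⊆ Z_2(g)], makes [c - c ∘ f~ = c ∘ r ∘ ∂] a coboundary for every cocycle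
   [c], and [φ ∘ f~] determines [φ] on [Z_2(g)]: this is the bijection
   [Lin(H_2(g), z) ≅ H^2(g, z)].  Factorizations through non-surjective linear
   maps come from Zorn's lemma. *)

Section LinearMaps.
Variable K : fieldType.
Implicit Types U V W : lmodType K.

Lemma linB U V (f : U -> V) : lin f -> forall x y, f (x - y) = f x - f y.
Proof. exact: zmod_morphism_linear. Qed.

Lemma lin0 U V (f : U -> V) : lin f -> f 0 = 0.
Proof. by move=> f_lin; rewrite -(subrr 0) linB ?subrr. Qed.

Lemma linD U V (f : U -> V) : lin f -> forall x y, f (x + y) = f x + f y.
Proof. by move=> f_lin; case: (GRing.semilinear_linear f_lin). Qed.

Lemma lin_zero U V : lin (fun _ : U => 0 : V).
Proof. by move=> a x y; rewrite scaler0 addr0. Qed.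

Lemma lin_comp U V W (f : V -> W) (g : U -> V) :
  lin f -> lin g -> lin (fun x => f (g x)).
Proof. by move=> f_lin g_lin a x y; rewrite g_lin f_lin. Qed.

Lemma lin_add U V (f g : U -> V) : lin f -> lin g -> lin (fun x => f x + g x).
Proof. by move=> f_lin g_lin a x y; rewrite f_lin g_lin scalerDr addrACA. Qed.

Lemma lin_scale U V (c : K) (f : U -> V) : lin f -> lin (fun x => c *: f x).
Proof. by move=> f_lin a x y; rewrite f_lin scalerDr scalerA mulrC -scalerA. Qed.

Lemma lin_opp U V (f : U -> V) : lin f -> lin (fun x => - f x).
Proof. by move=> f_lin a x y; rewrite f_lin opprD scalerN. Qed.

Lemma lin_sub U V (f g : U -> V) : lin f -> lin g -> lin (fun x => f x - g x).
Proof. by move=> f_lin g_lin; apply/lin_add/lin_opp. Qed.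

End LinearMaps.

Arguments lin_zero {K U V}.

Section LinearFactorization.
Local Open Scope classical_set_scope.
Variables (K : fieldType) (X Y Z : lmodType K) (m : X -> Y) (h : X -> Z).
Hypotheses (m_lin : lin m) (h_lin : lin h) (ker_mh : forall x, m x = 0 -> h x = 0).

(* Zorn's lemma runs over graphs [G] of partial factorizations; adjoining the graph
   of [h] along [m] to every candidate keeps the union of the empty chain admissible. *)
Let mh_graph (p : Y * Z) := exists x, p = (m x, h x).
Let extended (G : set (Y * Z)) := G `|` mh_graph.
Let functional (G : set (Y * Z)) := forall y z z', G (y, z) -> G (y, z') -> z = z'.
Let closed (G : set (Y * Z)) := forall a p q, G p -> G q -> G (a *: p + q).
Let partial_factor G := functional (extended G) /\ closed (extended G).

Let mh_graph_functional : functional mh_graph.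
Proof.
move=> y _ _ [x [-> ->]] [x' [mxx' ->]]; apply/eqP; rewrite -subr_eq0 -linB //.
by apply/eqP/ker_mh; rewrite linB // mxx' subrr.
Qed.

Let mh_graph_closed : closed mh_graph.
Proof. by move=> a _ _ [x ->] [x' ->]; exists (a *: x + x'); rewrite m_lin h_lin. Qed.

Let partial_factor_chain (F : set (set (Y * Z))) :
  F `<=` partial_factor -> total_on F subset -> partial_factor (\bigcup_(G in F) G).
Proof.
move=> Fpf Ftot; set U := \bigcup_(G in F) G.
have common p q : extended U p -> extended U q ->
    (exists2 G, F G & extended G p /\ extended G q) \/ (mh_graph p /\ mh_graph q).
  move=> [[G1 FG1 G1p]|mhp] [[G2 FG2 G2q]|mhq]; last by right.
  - left; have [G12|G21] := Ftot _ _ FG1 FG2.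
    + by exists G2 => //; split; left => //; apply: G12.
    + by exists G1 => //; split; left => //; apply: G21.
  - by left; exists G1 => //; split; [left|right].
  - by left; exists G2 => //; split; [right|left].
split.
- move=> y z z' Uz Uz'; have [[G FG [Gz Gz']]|[mhz mhz']] := common _ _ Uz Uz'.
  + exact: (Fpf _ FG).1 Gz Gz'.
  + exact: mh_graph_functional mhz mhz'.
- move=> a p q Up Uq; have [[G FG [Gp Gq]]|[mhp mhq]] := common _ _ Up Uq.
  + by case: ((Fpf _ FG).2 a p q Gp Gq) => [Gpq|?]; [left; exists G|right].
  + by right; apply: mh_graph_closed.
Qed.

(* Otherwise adjoining [(y, 0)] to [G] contradicts maximality. *)
Let partial_factor_maximal_total (G : set (Y * Z)) : partial_factor G ->
  (forall G', G `<` G' -> ~ partial_factor G') -> forall y, exists z, extended G (y, z).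
Proof.
move=> [Gfun Gclosed] Gmax y.
have [//|Gy] := pselect (exists z, extended G (y, z)); exfalso.
have G0 : extended G 0 by right; exists 0; rewrite (lin0 m_lin) (lin0 h_lin).
pose G' p := exists a q, extended G q /\ p = q + a *: (y, 0).
have extG' p : extended G' p -> G' p.
  by case=> // mhp; exists 0, p; rewrite scale0r addr0; split => //; right.
apply: (Gmax G'); split.
- by move=> p Gp; exists 0, p; rewrite scale0r addr0; split => //; left.
- move=> G'G; apply: Gy; exists 0; left; apply: G'G.
  by exists 1, 0; rewrite scale1r add0r.
- move=> _ z z' /extG' [a [[qy qz] [Gq /= [-> ->]]]].
  move=> /extG' [a' [[qy' qz'] [Gq' /= [yq ->]]]]; rewrite !scaler0 !addr0.
  have [eq_a|neq_a] := eqVneq a a'.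
    by move: yq; rewrite eq_a => /addIr eq_qy; apply: Gfun Gq _; rewrite eq_qy.
  (* otherwise [(a - a') y = qy' - qy] gives [y] a value *)
  have Gd := Gclosed (a - a')^-1 _ _ (Gclosed (-1) _ _ Gq Gq') G0.
  case: Gy; exists ((a - a')^-1 *: (- qz + qz')).
  suff -> : y = (a - a')^-1 *: (- qy + qy') by move: Gd; rewrite scaleN1r addr0.
  have nz : a - a' != 0 by rewrite subr_eq0.
  rewrite -[LHS](scalerK nz); congr (_ *: _); rewrite scalerBl.
  by apply/(addIr (a' *: y))/(addrI qy); rewrite subrK -addrA addNKr.
- move=> c p p' /extG' [a [q [Gq ->]]] /extG' [a' [q' [Gq' ->]]]; left.
  exists (c * a + a'), (c *: q + q'); split; first exact: Gclosed.
  by rewrite scalerDr addrACA scalerA scalerDl.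
Qed.

Lemma lin_factor : exists l : Y -> Z, lin l /\ forall x, l (m x) = h x.
Proof.
have [G [[Gfun Gclosed] Gmax]] := Zorn_bigcup partial_factor_chain.
have [l lP] := choice (partial_factor_maximal_total (conj Gfun Gclosed) Gmax).
exists l; split => [a y y'|x].
  exact: Gfun (lP _) (Gclosed a (y, l y) (y', l y') (lP y) (lP y')).
by apply: Gfun (lP _) _; right; exists x.
Qed.

End LinearFactorization.

Section Tensors.
Variable K : fieldType.
Implicit Types A V W T G L : lmodType K.

Lemma ex_tensor_map A V T A' V' T' (t : A -> V -> T) (t' : A' -> V' -> T')
    (f : A -> A') (h : V -> V') :
  is_tensor t -> bilin t' -> lin f -> lin h ->
  exists F : T -> T', lin F /\ forall a v, F (t a v) = t' (f a) (h v).
Proof.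
move=> [_ [_ t_univ]] [t'_lin2 t'_lin1] f_lin h_lin.
apply: (t_univ _ (fun a v => t' (f a) (h v))).
split=> [a|v]; first exact: lin_comp (t'_lin2 _) h_lin.
exact: lin_comp (t'_lin1 _) f_lin.
Qed.

Lemma eq_lin_wedge_tensor A V G L W (t : A -> V -> G) (w : G -> G -> L)
    (F F' : L -> W) :
  generated2 t -> bilin w -> generated2 w -> lin F -> lin F' ->
  (forall a x b y, F (w (t a x) (t b y)) = F' (w (t a x) (t b y))) ->
  forall z, F z = F' z.
Proof.
move=> t_gen [w_lin2 w_lin1] w_gen F_lin F'_lin eqFF'; apply: w_gen => // u v.
apply: (t_gen _ (fun v => F (w u v)) (fun v => F' (w u v))) => [||b y].
- exact: lin_comp F_lin (w_lin2 u).
- exact: lin_comp F'_lin (w_lin2 u).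
apply: (t_gen _ (fun u => F (w u _)) (fun u => F' (w u _))) => [||a x].
- exact: lin_comp F_lin (w_lin1 _).
- exact: lin_comp F'_lin (w_lin1 _).
exact: eqFF'.
Qed.

Lemma trilin_tensor_eq0 A V G W (t : A -> V -> G) (J : G -> G -> G -> W) :
  generated2 t ->
  (forall v w, lin (fun u => J u v w)) -> (forall u w, lin (fun v => J u v w)) ->
  (forall u v, lin (J u v)) ->
  (forall a x b y c z, J (t a x) (t b y) (t c z) = 0) -> forall u v w, J u v w = 0.
Proof.
move=> t_gen J_lin1 J_lin2 J_lin3 J0 u v w.
apply: (t_gen _ (fun u => J u v w) (fun=> 0) (J_lin1 v w) lin_zero) => a x.
apply: (t_gen _ (fun v => J _ v w) (fun=> 0) (J_lin2 _ w) lin_zero) => b y.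
apply: (t_gen _ (J _ _) (fun=> 0) (J_lin3 _ _) lin_zero) => c z.
exact: J0.
Qed.

End Tensors.

Section Squares.
Variable K : fieldType.
Implicit Types V S W : lmodType K.

(* [e = 1]: symmetric squares; [e = -1]: exterior squares, provided [2] is invertible. *)
Definition square_universal (e : K) V S (s : V -> V -> S) :=
  generated2 s /\ forall W (b : V -> V -> W), bilin b ->
    (forall u v, b v u = e *: b u v) ->
    exists f : S -> W, lin f /\ forall u v, f (s u v) = b u v.

Lemma bilin_skew V W (e : K) (b : V -> V -> W) :
  (forall v, lin (b^~ v)) -> (forall u v, b v u = e *: b u v) -> bilin b.
Proof.
move=> b_lin1 b_skew; split=> // u c v v'.
by rewrite !(b_skew _ u) (lin_scale e (b_lin1 u)).
Qed.

Lemma sym2_universal V S (s : V -> V -> S) : is_sym2 s -> square_universal 1 s.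
Proof.
move=> [_ [_ [s_gen s_univ]]]; split=> // W b b_bil b_sym.
by apply: s_univ => // u v; rewrite b_sym scale1r.
Qed.

Lemma ext2_universal V S (s : V -> V -> S) :
  (2%:R : K) != 0 -> is_ext2 s -> square_universal (-1) s.
Proof.
move=> two_neq0 [_ [_ [s_gen s_univ]]]; split=> // W b b_bil b_skew.
apply: s_univ => // v; apply/eqP.
have : (2%:R : K) *: b v v == 0 by rewrite scaler_nat mulr2n {1}b_skew scaleN1r addNr.
by rewrite scaler_eq0 (negPf two_neq0).
Qed.

Lemma bilin_anti V W (b : V -> V -> W) : bilin b -> (forall v, b v v = 0) ->
  forall u v, b v u = - b u v.
Proof.
move=> [b_lin2 b_lin1] b_alt u v; apply/eqP; rewrite -addr_eq0.
have := b_alt (u + v); rewrite (linD (b_lin2 _)) !(linD (b_lin1 _)) !b_alt add0r addr0.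
by rewrite addrC => ->.
Qed.

End Squares.

Section TensorOfSquares.
Variables (K : fieldType) (V1 V2 S1 S2 T W : lmodType K) (e1 e2 : K).
Variables (s1 : V1 -> V1 -> S1) (s2 : V2 -> V2 -> S2) (tt : S1 -> S2 -> T).
Hypotheses (s1_univ : square_universal e1 s1) (s2_univ : square_universal e2 s2).
Hypothesis tt_tensor : is_tensor tt.
Variable beta : V1 -> V1 -> V2 -> V2 -> W.
Hypotheses (beta_lin1 : forall b x y, lin (fun a => beta a b x y))
  (beta_lin3 : forall a b y, lin (fun x => beta a b x y))
  (beta_skew12 : forall a b x y, beta b a x y = e1 *: beta a b x y)
  (beta_skew34 : forall a b x y, beta a b y x = e2 *: beta a b x y).

Lemma tensor_square_lift :
  exists Q : T -> W, lin Q /\ forall a b x y, Q (tt (s1 a b) (s2 x y)) = beta a b x y.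
Proof.
have [s1_gen s1_ex] := s1_univ; have [s2_gen s2_ex] := s2_univ.
have /choice[F FP] (ab : V1 * V1) : exists F : S2 -> W,
    lin F /\ forall x y, F (s2 x y) = beta ab.1 ab.2 x y.
  by apply: s2_ex => //; apply: bilin_skew.
pose Fn a b := F (a, b).
have Fn_lin a b : lin (Fn a b) := (FP (a, b)).1.
have FnE a b x y : Fn a b (s2 x y) = beta a b x y := (FP (a, b)).2 x y.
have Fn_lin1 b s : lin (fun a => Fn a b s).
  move=> c a a'; move: s; apply: s2_gen => [||x y]; first exact: Fn_lin.
    by apply: lin_add; [apply: lin_scale|].
  by rewrite !FnE beta_lin1.
have Fn_skew a b s : Fn b a s = e1 *: Fn a b s.
  move: s; apply: s2_gen => [||x y]; [exact: Fn_lin | exact: lin_scale |].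
  by rewrite !FnE beta_skew12.
have /choice[G GP] (s : S2) : exists G : S1 -> W,
    lin G /\ forall a b, G (s1 a b) = Fn a b s.
  by apply: s1_ex => //; apply: bilin_skew.
have G_lin s : lin (G s) := (GP s).1.
have GE s a b : G s (s1 a b) = Fn a b s := (GP s).2 a b.
have G_lin1 u : lin (fun s => G s u).
  move=> c s s'; move: u; apply: s1_gen => [||a b]; first exact: G_lin.
    by apply: lin_add; [apply: lin_scale|].
  by rewrite !GE Fn_lin.
have [_ [_ tt_univ]] := tt_tensor.
have [Q [Q_lin QE]] := tt_univ W (fun u s => G s u) (conj G_lin1 G_lin).
by exists Q; split=> // a b x y; rewrite QE GE FnE.
Qed.

End TensorOfSquares.

Section WedgeOfTensor.
Variables (K : fieldType) (A k g Lg : lmodType K) (t : A -> k -> g) (wg : g -> g -> Lg).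
Hypotheses (t_bil : bilin t) (wg_bil : bilin wg) (wg_alt : forall u, wg u u = 0).

Lemma ex_wedge_tensor_lift (e : K) (S1 S2 T : lmodType K)
    (s1 : A -> A -> S1) (s2 : k -> k -> S2) (tt : S1 -> S2 -> T) :
  e * e = 1 -> square_universal (- e) s1 -> square_universal e s2 -> is_tensor tt ->
  exists Q : T -> Lg, lin Q /\ forall a b x y,
    Q (tt (s1 a b) (s2 x y)) = wg (t a x) (t b y) + e *: wg (t a y) (t b x).
Proof.
move=> ee s1_univ s2_univ tt_tensor.
have [[t_lin2 t_lin1] [wg_lin2 wg_lin1]] := (t_bil, wg_bil).
have wg_anti := bilin_anti wg_bil wg_alt.
apply: (tensor_square_lift s1_univ s2_univ tt_tensor
  (beta := fun a b x y => wg (t a x) (t b y) + e *: wg (t a y) (t b x)))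
  => [b x y|a b y|a b x y|a b x y].
- by apply: lin_add; last apply: lin_scale; exact: lin_comp (wg_lin1 _) (t_lin1 _).
- apply: lin_add; last apply: lin_scale.
  + exact: lin_comp (wg_lin1 _) (t_lin2 _).
  + exact: lin_comp (wg_lin2 _) (t_lin2 _).
- rewrite (wg_anti (t a y)) (wg_anti (t a x)) scalerDr scalerA mulNr ee.
  by rewrite scaleN1r scaleNr scalerN addrC.
- by rewrite scalerDr scalerA ee scale1r addrC.
Qed.

End WedgeOfTensor.

Section WedgeOfCurrentAlgebra.
Variables (K : fieldType) (A : comAlgType K) (k g Lg : lmodType K).
Hypothesis two_neq0 : (2%:R : K) != 0.
Variables (t : A -> k -> g) (wg : g -> g -> Lg).
Hypotheses (g_tensor : is_tensor t) (Lg_ext : is_ext2 wg).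
Variables (LA SA Lk Sk : lmodType K) (wA : A -> A -> LA) (sA : A -> A -> SA).
Variables (wk : k -> k -> Lk) (sk : k -> k -> Sk).
Hypotheses (LA_ext : is_ext2 wA) (SA_sym : is_sym2 sA).
Hypotheses (Lk_ext : is_ext2 wk) (Sk_sym : is_sym2 sk).
Variables (T1 T2 T3 : lmodType K).
Variables (t1 : LA -> Sk -> T1) (t2 : A -> Lk -> T2) (t3 : SA -> Lk -> T3).
Hypotheses (T1_tensor : is_tensor t1) (T2_tensor : is_tensor t2).
Hypothesis T3_tensor : is_tensor t3.
Variables (p1 : Lg -> T1) (p2 : Lg -> T2) (p3 : Lg -> T3).
Hypotheses (p1_lin : lin p1) (p2_lin : lin p2) (p3_lin : lin p3).
Hypothesis p1E : forall a b x y, p1 (wg (t a x) (t b y)) = t1 (wA a b) (sk x y).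
Hypothesis p2E : forall a b x y, p2 (wg (t a x) (t b y)) = t2 (a * b) (wk x y).
Hypothesis p3E : forall a b x y,
  p3 (wg (t a x) (t b y)) = t3 (sA a b - sA (a * b) 1) (wk x y).

Lemma P_left_inverse : exists (L1 : T1 -> Lg) (L2 : T2 -> Lg) (L3 : T3 -> Lg),
  [/\ lin L1, lin L2, lin L3 & forall x, x = L1 (p1 x) + L2 (p2 x) + L3 (p3 x)].
Proof.
have [t_bil [t_gen _]] := g_tensor; have [wg_bil [wg_alt [wg_gen _]]] := Lg_ext.
have [Q1 [Q1_lin Q1E]] := ex_wedge_tensor_lift t_bil wg_bil wg_alt (e := 1) (mulr1 1)
  (ext2_universal two_neq0 LA_ext) (sym2_universal Sk_sym) T1_tensor.
have sA_univ : square_universal (- -1) sA by rewrite opprK; apply: sym2_universal.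
have [Q3 [Q3_lin Q3E]] := ex_wedge_tensor_lift t_bil wg_bil wg_alt (e := -1)
  (etrans (mulrNN 1 1) (mulr1 1)) sA_univ (ext2_universal two_neq0 Lk_ext) T3_tensor.
have [[t3_lin2 t3_lin1] [[_ sA_lin1] _]] := (T3_tensor.1, SA_sym).
have [R [R_lin RE]] := ex_tensor_map (f := fun c => sA c 1) (h := id)
  T2_tensor T3_tensor.1 (sA_lin1 1) (fun _ _ _ => erefl).
(* [R] restores from [p2] the term [ab ∨ 1] subtracted in [p3]. *)
exists (fun u => 2%:R^-1 *: Q1 u), (fun w => 2%:R^-1 *: Q3 (R w)).
exists (fun u => 2%:R^-1 *: Q3 u).
split; [exact: lin_scale | exact/lin_scale/lin_comp | exact: lin_scale |].
apply: (eq_lin_wedge_tensor t_gen wg_bil wg_gen (F := id)) => // [|a x b y].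
  apply: lin_add; [apply: lin_add|]; apply: lin_scale.
  - exact: lin_comp Q1_lin p1_lin.
  - exact: lin_comp Q3_lin (lin_comp R_lin p2_lin).
  - exact: lin_comp Q3_lin p3_lin.
rewrite p1E p2E p3E RE -!scalerDr -addrA -(linD Q3_lin) -(linD (t3_lin1 _)).
rewrite subrKC Q1E Q3E scale1r scaleN1r addrACA subrr addr0 -mulr2n -scaler_nat scalerA.
by rewrite mulVf ?scale1r.
Qed.

End WedgeOfCurrentAlgebra.

Section TensorWithProjection.
Variables (K : fieldType) (A V U T G : lmodType K) (f : V -> U) (p : V -> V).
Hypotheses (f_lin : lin f) (p_lin : lin p).
Hypotheses (fp : forall z, f (p z) = 0) (p_id : forall z, f z = 0 -> p z = z).
Variables (tV : A -> V -> T) (tU : A -> U -> G).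
Hypotheses (tV_tensor : is_tensor tV) (tU_tensor : is_tensor tU).
Variables (idp : T -> T) (idf : T -> G).
Hypotheses (idp_lin : lin idp) (idpE : forall a z, idp (tV a z) = tV a (p z)).
Hypotheses (idf_lin : lin idf) (idfE : forall a z, idf (tV a z) = tU a (f z)).

Lemma idf_idp w : idf (idp w) = 0.
Proof.
have [[tU_lin2 _] [_ [tV_gen _]]] := (tU_tensor.1, tV_tensor).
move: w; apply: (tV_gen _ (fun w => idf (idp w)) (fun=> 0)) => [||a z].
- exact: lin_comp idf_lin idp_lin.
- exact: lin_zero.
by rewrite idpE idfE fp (lin0 (tU_lin2 a)).
Qed.

(* [1 - p] factors through [f]; tensor that factorization with [A]. *)
Lemma sub_idp_factor : exists sg : G -> T, lin sg /\ forall w, sg (idf w) = w - idp w.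
Proof.
have [s [s_lin sE]] : exists s : U -> V, lin s /\ forall z, s (f z) = z - p z.
  by apply: lin_factor => // [|z /p_id ->]; [apply: lin_sub | rewrite subrr].
have [[tV_lin2 _] [_ [tV_gen _]]] := (tV_tensor.1, tV_tensor).
have [sg [sg_lin sgE]] := ex_tensor_map (f := id) (h := s) tU_tensor tV_tensor.1
  (fun _ _ _ => erefl) s_lin.
exists sg; split=> //; apply: tV_gen => [||a z].
- exact: lin_comp sg_lin idf_lin.
- exact: lin_sub.
by rewrite idfE sgE sE idpE (linB (tV_lin2 a)).
Qed.

End TensorWithProjection.

Section CurrentAlgebra.
Variables (K : fieldType) (A : comAlgType K) (k g : lmodType K).
Variables (br : k -> k -> k) (t : A -> k -> g) (brg : g -> g -> g).
Hypotheses (k_lie : is_lie br) (g_tensor : is_tensor t) (brg_bil : bilin brg).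
Hypothesis brgE : forall a b x y, brg (t a x) (t b y) = t (a * b) (br x y).

Let jacobiator u v w := brg (brg u v) w + brg (brg v w) u + brg (brg w u) v.

Let jacobiator_cycle u v w : jacobiator u v w = jacobiator v w u.
Proof. by rewrite /jacobiator -addrA addrC. Qed.

Let jacobiator_lin1 v w : lin (fun u => jacobiator u v w).
Proof.
have [brg_lin2 brg_lin1] := brg_bil.
apply: lin_add; first apply: lin_add.
- exact: lin_comp (brg_lin1 w) (brg_lin1 v).
- exact: brg_lin2.
- exact: lin_comp (brg_lin1 v) (brg_lin2 w).
Qed.

Lemma current_jacobi u v w :
  brg (brg u v) w + brg (brg v w) u + brg (brg w u) v = 0.
Proof.
have [[t_lin2 _] [_ [t_gen _]]] := (g_tensor.1, g_tensor).
have [br_bil [br_alt br_jacobi]] := k_lie; have br_anti := bilin_anti br_bil br_alt.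
move: u v w; apply: (trilin_tensor_eq0 (J := jacobiator) t_gen)
  => [v w|u w c v v'|u v c w w'|].
- exact: jacobiator_lin1.
- by rewrite !(jacobiator_cycle u) jacobiator_lin1.
- by rewrite !(jacobiator_cycle u v) !(jacobiator_cycle v) jacobiator_lin1.
move=> a x b y c z; rewrite /jacobiator !brgE.
have -> : b * c * a = a * b * c by rewrite mulrC mulrA.
have -> : c * a * b = a * b * c by rewrite -mulrA mulrC.
rewrite -!(linD (t_lin2 _)) !(br_anti _ (br _ _)) -!opprD.
by rewrite -addrA addrC br_jacobi oppr0 (lin0 (t_lin2 _)).
Qed.

End CurrentAlgebra.

Section Boundaries.
Variables (K : fieldType) (g Lg L3 : lmodType K) (brg : g -> g -> g).
Variables (wg : g -> g -> Lg) (w3 : g -> g -> g -> L3) (bg : Lg -> g) (d3 : L3 -> Lg).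
Hypotheses (L3_ext : is_ext3 w3) (bg_lin : lin bg) (d3_lin : lin d3).
Hypothesis bgE : forall u v, bg (wg u v) = brg u v.
Hypothesis d3E : forall u v w,
  d3 (w3 u v w) = wg (brg u v) w + wg (brg v w) u + wg (brg w u) v.
Hypothesis brg_jacobi : forall u v w,
  brg (brg u v) w + brg (brg v w) u + brg (brg w u) v = 0.

Lemma boundary_cycle y : bg (d3 y) = 0.
Proof.
have [_ [_ [w3_gen _]]] := L3_ext.
move: y; apply: (w3_gen _ (fun y => bg (d3 y)) (fun=> 0)) => [||u v w].
- exact: lin_comp bg_lin d3_lin.
- exact: lin_zero.
by rewrite d3E !(linD bg_lin) !bgE brg_jacobi.
Qed.

End Boundaries.

Section HomologyDuality.
Variables (K : fieldType) (g Lg L3 : lmodType K) (brg : g -> g -> g).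
Variables (wg : g -> g -> Lg) (bg : Lg -> g) (d3 : L3 -> Lg).
Variables (ft : Lg -> Lg) (r : g -> Lg).
Hypotheses (wg_gen : generated2 wg) (bg_lin : lin bg) (ft_lin : lin ft) (r_lin : lin r).
Hypothesis bgE : forall u v, bg (wg u v) = brg u v.
Hypothesis bg_d3 : forall y, bg (d3 y) = 0.
Hypothesis ft_cycle : forall x, bg (ft x) = 0.
Hypothesis ft_split : forall x, x - ft x = r (bg x).

Lemma ft_id_cycle x : bg x = 0 -> ft x = x.
Proof. by move=> bgx0; apply/esym/eqP; rewrite -subr_eq0 ft_split bgx0 (lin0 r_lin). Qed.

Section Functionals.
Variable z : lmodType K.

Definition H2_functional (phi : Lg -> z) :=
  (forall (a : K) x y, bg x = 0 -> bg y = 0 -> phi (a *: x + y) = a *: phi x + phi y)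
  /\ (forall y, phi (d3 y) = 0).

Lemma H2_functional_cocycle phi : H2_functional phi ->
  lin (fun x => phi (ft x)) /\ forall y, phi (ft (d3 y)) = 0.
Proof.
move=> [phi_lin phi_d3]; split=> [a x y|y]; first by rewrite ft_lin phi_lin.
by rewrite ft_id_cycle.
Qed.

Lemma H2_functional_inj phi psi : H2_functional phi -> H2_functional psi ->
  (exists l : g -> z, lin l /\
    forall u v, phi (ft (wg u v)) - psi (ft (wg u v)) = - l (brg u v)) ->
  forall x, bg x = 0 -> phi x = psi x.
Proof.
move=> /H2_functional_cocycle[phift_lin _] /H2_functional_cocycle[psift_lin _].
move=> [l [l_lin lE]] x bgx0; apply/eqP; rewrite -subr_eq0 -[x]ft_id_cycle //.
have -> : phi (ft x) - psi (ft x) = - l (bg x).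
  move: x {bgx0}; apply: wg_gen => [||u v]; first exact: lin_sub.
    exact/lin_opp/lin_comp.
  by rewrite lE bgE.
by rewrite bgx0 (lin0 l_lin) oppr0.
Qed.

Lemma H2_functional_surj c : lin c -> (forall y, c (d3 y) = 0) ->
  exists phi, H2_functional phi /\ exists l : g -> z, lin l /\
    forall u v, c (wg u v) - phi (ft (wg u v)) = - l (brg u v).
Proof.
move=> c_lin c_d3; exists c; split; first by split=> // a x y _ _; apply: c_lin.
exists (fun v => - c (r v)); split; first exact/lin_opp/lin_comp.
by move=> u v; rewrite opprK -(linB c_lin) ft_split bgE.
Qed.

End Functionals.

Lemma H2_duality :
  (forall x, (exists y, d3 y = x) -> exists y, d3 y = ft x) /\
  forall z : lmodType K,
    (forall phi : Lg -> z, H2_functional phi ->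
       lin (fun x => phi (ft x)) /\ (forall y, phi (ft (d3 y)) = 0)) /\
    (forall phi psi : Lg -> z, H2_functional phi -> H2_functional psi ->
       (exists l : g -> z, lin l /\
          forall u v, phi (ft (wg u v)) - psi (ft (wg u v)) = - l (brg u v)) ->
       forall x, bg x = 0 -> phi x = psi x) /\
    (forall c : Lg -> z, lin c -> (forall y, c (d3 y) = 0) ->
       exists phi, H2_functional phi /\ exists l : g -> z, lin l /\
         forall u v, c (wg u v) - phi (ft (wg u v)) = - l (brg u v)).
Proof.
split=> [_ [y <-]|z]; first by exists y; rewrite ft_id_cycle.
split; first exact: H2_functional_cocycle.
by split; [exact: H2_functional_inj | exact: H2_functional_surj].
Qed.

End HomologyDuality.

Theorem proposition3p9
  (K : fieldType) (two_unit : (2%:R : K) != 0)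
  (A : comAlgType K)
  (k : lmodType K) (br : k -> k -> k) (k_lie : is_lie br)
  (* g = A (x) k, t a x = a x, with bracket [ax, a'x'] = aa'[x,x'] *)
  (g : lmodType K) (t : A -> k -> g) (g_tens : is_tensor t)
  (brg : g -> g -> g) (brg_bil : bilin brg)
  (brg_def : forall a b x y, brg (t a x) (t b y) = t (a * b) (br x y))
  (* Lambda^2(g), Lambda^3(g) *)
  (Lg : lmodType K) (wg : g -> g -> Lg) (Lg_ext : is_ext2 wg)
  (L3g : lmodType K) (w3 : g -> g -> g -> L3g) (L3g_ext : is_ext3 w3)
  (* bg : Lambda^2(g) -> g, u /\ v |-> [u,v]  (Z_2(g) = ker bg) *)
  (bg : Lg -> g) (bg_lin : lin bg) (bg_def : forall u v, bg (wg u v) = brg u v)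
  (* d3 : Lambda^3(g) -> Lambda^2(g)  (B_2(g) = im d3) *)
  (d3 : L3g -> Lg) (d3_lin : lin d3)
  (d3_def : forall u v w, d3 (w3 u v w) =
      wg (brg u v) w + wg (brg v w) u + wg (brg w u) v)
  (* Lambda^2(k), S^2(k), and bk : Lambda^2(k) -> k  (Z_2(k) = ker bk) *)
  (Lk : lmodType K) (wk : k -> k -> Lk) (Lk_ext : is_ext2 wk)
  (Sk : lmodType K) (sk : k -> k -> Sk) (Sk_sym : is_sym2 sk)
  (bk : Lk -> k) (bk_lin : lin bk) (bk_def : forall x y, bk (wk x y) = br x y)
  (* Lambda^2(A), S^2(A) *)
  (LA : lmodType K) (wA : A -> A -> LA) (LA_ext : is_ext2 wA)
  (SA : lmodType K) (sA : A -> A -> SA) (SA_sym : is_sym2 sA)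
  (* T1 = Lambda^2(A) (x) S^2(k), T2 = A (x) Lambda^2(k), T3 = S^2(A) (x) Lambda^2(k)
     (T3 contains I_A (x) Lambda^2(k)) *)
  (T1 : lmodType K) (t1 : LA -> Sk -> T1) (T1_tens : is_tensor t1)
  (T2 : lmodType K) (t2 : A -> Lk -> T2) (T2_tens : is_tensor t2)
  (T3 : lmodType K) (t3 : SA -> Lk -> T3) (T3_tens : is_tensor t3)
  (* the components p1, p2, p3 of P *)
  (p1 : Lg -> T1) (p1_lin : lin p1)
  (p1_def : forall a b x y, p1 (wg (t a x) (t b y)) = t1 (wA a b) (sk x y))
  (p2 : Lg -> T2) (p2_lin : lin p2)
  (p2_def : forall a b x y, p2 (wg (t a x) (t b y)) = t2 (a * b) (wk x y))
  (p3 : Lg -> T3) (p3_lin : lin p3)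
  (p3_def : forall a b x y, p3 (wg (t a x) (t b y)) =
      t3 (sA a b - sA (a * b) 1) (wk x y))
  (* p_k : linear projection of Lambda^2(k) onto Z_2(k) *)
  (pk : Lk -> Lk) (pk_lin : lin pk) (pk_Z2 : forall z, bk (pk z) = 0)
  (pk_id : forall z, bk z = 0 -> pk z = z)
  (* id_A (x) p_k on T2 *)
  (idpk : T2 -> T2) (idpk_lin : lin idpk)
  (idpk_def : forall a z, idpk (t2 a z) = t2 a (pk z))
  (* ftilde = P^{-1} o (p1, (id_A (x) p_k) o p2, p3), i.e. P o ftilde = (p1, (id (x) p_k) o p2, p3) *)
  (ft : Lg -> Lg) (ft_lin : lin ft)
  (ft_p1 : forall x, p1 (ft x) = p1 x)
  (ft_p2 : forall x, p2 (ft x) = idpk (p2 x))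
  (ft_p3 : forall x, p3 (ft x) = p3 x) :
  (* ftilde takes values in Z_2(g) *)
  (forall x, bg (ft x) = 0) /\
  (* ftilde maps B_2(g) into B_2(g) *)
  (forall x, (exists y, d3 y = x) -> exists y, d3 y = ft x) /\
  forall z : lmodType K,
    (* phi : H_2(g) -> z linear is represented by phi : Lg -> z, linear on Z_2(g)
       and vanishing on B_2(g) (values outside Z_2(g) are irrelevant) *)
    let linH2 (phi : Lg -> z) :=
      (forall (a : K) x y, bg x = 0 -> bg y = 0 -> phi (a *: x + y) = a *: phi x + phi y)
      /\ (forall y, phi (d3 y) = 0) in
    (* phi o f^u is a 2-cocycle on g with values in z *)
    (forall phi, linH2 phi -> lin (fun x => phi (ft x)) /\ (forall y, phi (ft (d3 y)) = 0)) /\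
    (* injectivity: [phi o f^u] = [psi o f^u] in H^2(g,z) implies phi = psi on H_2(g) *)
    (forall phi psi, linH2 phi -> linH2 psi ->
       (exists l : g -> z, lin l /\
          forall u v, phi (ft (wg u v)) - psi (ft (wg u v)) = - l (brg u v)) ->
       forall x, bg x = 0 -> phi x = psi x) /\
    (* surjectivity: every class in H^2(g,z) is [phi o f^u] *)
    (forall c : Lg -> z, lin c -> (forall y, c (d3 y) = 0) ->
       exists phi, linH2 phi /\
         exists l : g -> z, lin l /\
           forall u v, c (wg u v) - phi (ft (wg u v)) = - l (brg u v)).
Proof.
have [t_bil [t_gen _]] := g_tens; have [wg_bil [_ [wg_gen _]]] := Lg_ext.
have bg_d3 := boundary_cycle L3g_ext bg_lin d3_lin bg_def d3_def
  (current_jacobi k_lie g_tens brg_bil brg_def).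
have [idbk [idbk_lin idbkE]] := ex_tensor_map (f := id) (h := bk)
  T2_tens t_bil (fun _ _ _ => erefl) bk_lin.
have bg_idbk x : bg x = idbk (p2 x).
  move: x; apply: (eq_lin_wedge_tensor t_gen wg_bil wg_gen bg_lin) => [|a x b y].
    exact: lin_comp idbk_lin p2_lin.
  by rewrite bg_def brg_def p2_def idbkE bk_def.
have ft_cycle x : bg (ft x) = 0.
  by rewrite bg_idbk ft_p2
    (idf_idp pk_Z2 T2_tens g_tens idpk_lin idpk_def idbk_lin idbkE).
have [sg [sg_lin sgE]] :=
  sub_idp_factor bk_lin pk_lin pk_id T2_tens g_tens idpk_lin idpk_def idbk_lin idbkE.
have [L1 [L2 [L3 [_ L2_lin _ Pinv]]]] := P_left_inverse two_unit g_tens Lg_ext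
  LA_ext SA_sym Lk_ext Sk_sym T1_tens T2_tens T3_tens p1_lin p2_lin p3_lin
  p1_def p2_def p3_def.
have ft_split x : x - ft x = L2 (sg (bg x)).
  rewrite {1}[x]Pinv [ft x]Pinv ft_p1 ft_p2 ft_p3 bg_idbk sgE (linB L2_lin).
  by rewrite opprD addrACA subrr addr0 opprD addrACA subrr add0r.
split; first exact: ft_cycle.
exact: (H2_duality wg_gen bg_lin ft_lin (lin_comp L2_lin sg_lin) bg_def bg_d3
  ft_cycle ft_split).
Qed.
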